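(* Let $f$ be a Moufang permutation on an abelian group $(X,+)$ with associated biadditive mapping $\beta$, and let $i\in\mathbb Z$. Define $\beta_i(x,y)=\sum_{k\in I(0,i)}f^{-3k}(\beta(x,y))$. Then $f^i$ is a Moufang permutation on $(X,+)$ with associated biadditive mapping $\beta_i$, and $$\mathrm{Img}(\beta_i)\subseteq\mathrm{Img}(\beta)\subseteq\mathrm{Rad}(\beta)\subseteq\mathrm{Rad}(\beta_i).$$
   Context: A permutation $f$ of an abelian group $(X,+)$ is a Moufang permutation if the map $\beta(x,y)=f^{-1}(f(x)+f(y))-x-y$ (P1) is symmetric, alternating ($\beta(x,x)=0$) and biadditive, and for all $x,y,z\in X$: (P2) $\beta(\beta(x,y),z)=0$ and (P3) $\beta(f(x),f(y))=f(\beta(f^3(x),y))$; $\beta$ is the associated biadditive mapping. $\mathrm{Img}$ denotes image; $\mathrm{Rad}(\beta)=\{x\in X:\beta(x,y)=0\ \forall y\in X\}$. $I(i,j)$ is $\emptyset$ if $i=j$, $\{i,\dots,j-1\}$ if $i<j$, $\{j,\dots,i-1\}$ if $j<i$. *)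

From mathcomp Require Import all_boot all_order all_algebra.
Set Implicit Arguments. Unset Strict Implicit. Unset Printing Implicit Defensive.
Import GRing.Theory Num.Theory.
Local Open Scope ring_scope.

Section Moufang.
Variable X : zmodType.

Definition assoc_beta (f finv : X -> X) (x y : X) : X :=
  finv (f x + f y) - x - y.

Definition moufang_perm (f finv : X -> X) : Prop :=
  let b := assoc_beta f finv in
  [/\ cancel f finv, cancel finv f,
      [/\ (forall x y, b x y = b y x),
          (forall x, b x x = 0),
          (forall x y z, b (x + y) z = b x z + b y z) &
          (forall x y z, b x (y + z) = b x y + b x z)],
      (* (P2) *)
      (forall x y z, b (b x y) z = 0) &
      (* (P3) *)
      (forall x y, b (f x) (f y) = f (b (f (f (f x))) y))].

Definition fpow (f finv : X -> X) (i : int) : X -> X :=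
  match i with
  | Posz n => iter n f
  | Negz n => iter n.+1 finv
  end.

Definition Img (b : X -> X -> X) (z : X) : Prop := exists x y, z = b x y.
Definition Rad (b : X -> X -> X) (x : X) : Prop := forall y, b x y = 0.

End Moufang.

Definition intI (i j : int) : seq int :=
  if (i < j)%R then [seq i + (k%:Z) | k <- iota 0 `|j - i|%N]
  else if (j < i)%R then [seq j + (k%:Z) | k <- iota 0 `|i - j|%N]
  else [::].

Definition beta_i (X : zmodType) (f finv : X -> X) (i : int) (x y : X) : X :=
  \sum_(k <- intI 0 i) fpow f finv (- (k * 3)) (assoc_beta f finv x y).

From mathcomp Require Import all_boot all_order all_algebra zify.
Import GRing.Theory Num.Theory.
Local Open Scope ring_scope.
Set Implicit Arguments. Unset Strict Implicit.

(* Write g for the inverse of f and b for beta.  By definition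
   g (u + v) = g u + g v + b (g u) (g v), while (P3) gives
   g (b x y) = b (f^2 x) (g y) and makes f^3 self-adjoint for b.  Hence Img b
   is stable under f and g and, as Img b <= Rad b by (P2), f and g are
   additive on sums u + c with c in Img b.  By induction the associated mapping
   of f^n is sum_(m < n) g^(3m) (b x y), the new term being
   g^n (b (f^n x) (f^n y)) = b (f^(3n) x) y = g^(3n) (b x y); the Moufang
   axioms for f^n then hold termwise.  Finally g is itself Moufang with
   associated mapping f^3 (b x y), which reduces negative exponents to
   positive ones. *)

Lemma assoc_betaK (X : zmodType) (f g : X -> X) x y :
  g (f x + f y) = x + y + assoc_beta f g x y.
Proof. by rewrite /assoc_beta -[_ - x - y]addrA -opprD (addrC (x + y)) subrK. Qed.

Lemma assoc_beta_eq (X : zmodType) (f g : X -> X) x y z :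
  g (f x + f y) = x + y + z -> assoc_beta f g x y = z.
Proof. by rewrite /assoc_beta => ->; rewrite -[LHS]addrA -opprD (addrC (x + y + z)) addKr. Qed.

Section IterInverse.
Variables (T : Type) (f g : T -> T).
Hypotheses (fK : cancel f g) (gK : cancel g f).

Lemma iter_can n : cancel (iter n f) (iter n g).
Proof. by elim: n => // n IH x; rewrite iterSr iterS fK IH. Qed.

Lemma iter_comm_inv n k x : iter n f (iter k g x) = iter k g (iter n f x).
Proof.
have f_iterg m y : f (iter m g y) = iter m g (f y).
  by case: m => // m; rewrite iterS iterSr gK fK.
by elim: n => // n IH; rewrite !iterS IH f_iterg.
Qed.

End IterInverse.

Section MoufangPerm.
Variables (X : zmodType) (f g : X -> X).
Hypothesis M : moufang_perm f g.
Local Notation b := (assoc_beta f g).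

Lemma fK : cancel f g. Proof. by case: M. Qed.
Lemma gK : cancel g f. Proof. by case: M. Qed.
Lemma betaC x y : b x y = b y x. Proof. by case: M => _ _ []. Qed.
Lemma betaxx x : b x x = 0. Proof. by case: M => _ _ []. Qed.
Lemma betaDl x y z : b (x + y) z = b x z + b y z. Proof. by case: M => _ _ []. Qed.
Lemma betaDr x y z : b x (y + z) = b x y + b x z. Proof. by case: M => _ _ []. Qed.
Lemma beta_betal x y z : b (b x y) z = 0. Proof. by case: M. Qed.
Lemma beta_f x y : b (f x) (f y) = f (b (f (f (f x))) y). Proof. by case: M. Qed.

Lemma beta0l y : b 0 y = 0.
Proof. by apply: (addrI (b 0 y)); rewrite -betaDl !addr0. Qed.

Lemma oppr_beta x y : - b x y = b x y.
Proof.
have := betaxx (x + y).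
rewrite betaDl !betaDr !betaxx add0r addr0 (betaC y x) => /eqP.
by rewrite addr_eq0 => /eqP.
Qed.

Lemma Img_Rad z : Img b z -> Rad b z.
Proof. by case=> x [y ->] w; apply: beta_betal. Qed.

Lemma Rad_Img_r z y : Img b z -> b y z = 0.
Proof. by move=> /Img_Rad; rewrite betaC. Qed.

Lemma finvD u v : g (u + v) = g u + g v + b (g u) (g v).
Proof. by rewrite -assoc_betaK !gK. Qed.

Lemma finv_beta x y : g (b x y) = b (f (f x)) (g y).
Proof. by have := beta_f (g x) (g y); rewrite !gK => ->; rewrite fK. Qed.

Lemma f_beta x y : f (b x y) = b (g (g x)) (f y).
Proof. by have := beta_f (g (g (g x))) y; rewrite !gK => ->. Qed.

Lemma Img_f z : Img b z -> Img b (f z).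
Proof. by case=> x [y ->]; rewrite f_beta; do 2 eexists. Qed.

Lemma Img_finv z : Img b z -> Img b (g z).
Proof. by case=> x [y ->]; rewrite finv_beta; do 2 eexists. Qed.

Lemma Img_iter_f n z : Img b z -> Img b (iter n f z).
Proof. by move=> Hz; elim: n => // n IH; apply: Img_f. Qed.

Lemma Img_iter_finv n z : Img b z -> Img b (iter n g z).
Proof. by move=> Hz; elim: n => // n IH; apply: Img_finv. Qed.

Lemma finvD_Img u c : Img b c -> g (u + c) = g u + g c.
Proof. by move=> Hc; rewrite finvD Rad_Img_r ?addr0 //; apply: Img_finv. Qed.

Lemma fD_Img u c : Img b c -> f (u + c) = f u + f c.
Proof. by move=> Hc; apply: (can_inj gK); rewrite finvD_Img ?fK //; apply: Img_f. Qed.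

Lemma iter_finvD_Img n u c :
  Img b c -> iter n g (u + c) = iter n g u + iter n g c.
Proof.
by move=> Hc; elim: n => // n IH; rewrite !iterS IH finvD_Img //; apply: Img_iter_finv.
Qed.

Lemma iter_fD_Img n u c :
  Img b c -> iter n f (u + c) = iter n f u + iter n f c.
Proof.
by move=> Hc; elim: n => // n IH; rewrite !iterS IH fD_Img //; apply: Img_iter_f.
Qed.

Lemma finv0 : g 0 = 0.
Proof. by apply: (addrI (g 0)); rewrite -finvD_Img ?addr0 //; exists 0, 0; rewrite betaxx. Qed.

Lemma f0 : f 0 = 0. Proof. by rewrite -{1}finv0 gK. Qed.

Lemma iter_finv0 n : iter n g 0 = 0.
Proof. by elim: n => // n IH; rewrite iterS IH finv0. Qed.

Lemma iter_f0 n : iter n f 0 = 0.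
Proof. by elim: n => // n IH; rewrite iterS IH f0. Qed.

Lemma iter_f_sum k n (F : 'I_n -> X) : (forall i, Img b (F i)) ->
  iter k f (\sum_(i < n) F i) = \sum_(i < n) iter k f (F i).
Proof.
move=> HF; elim/big_rec2: _ => [|i u v _ <-]; first exact: iter_f0.
by rewrite addrC iter_fD_Img // addrC.
Qed.

Lemma beta_sum_Img n (F : 'I_n -> X) z : (forall i, Img b (F i)) ->
  b (\sum_(i < n) F i) z = 0.
Proof.
move=> HF; elim/big_ind: _ => [|u v Hu Hv|i _]; first exact: beta0l.
  by rewrite betaDl Hu Hv addr0.
exact: Img_Rad.
Qed.

Lemma beta_f3 x y : b (f (f (f x))) y = b x (f (f (f y))).
Proof. by rewrite (betaC x); apply: (can_inj fK); rewrite -!beta_f betaC. Qed.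

Lemma beta_finv3 x y : b (g (g (g x))) y = b x (g (g (g y))).
Proof. by have := beta_f3 (g (g (g x))) (g (g (g y))); rewrite !gK => ->. Qed.

Lemma iter_finv_beta n x y : iter n g (b x y) = b (iter n.*2 f x) (iter n g y).
Proof. by elim: n => // n IH; rewrite iterS IH finv_beta doubleS !iterS. Qed.

Lemma iter_f_beta n x y : iter n f (b x y) = b (iter n.*2 g x) (iter n f y).
Proof. by elim: n => // n IH; rewrite iterS IH f_beta doubleS !iterS. Qed.

Lemma finv3_beta x y : g (g (g (b x y))) = b (f (f (f x))) y.
Proof. by have /= -> := iter_finv_beta 3 x y; rewrite beta_f3 !gK. Qed.

Lemma f3_beta x y : f (f (f (b x y))) = b (g (g (g x))) y.
Proof. by have /= -> := iter_f_beta 3 x y; rewrite beta_finv3 !fK. Qed.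

Lemma iter3_finv_beta m x y : iter (m * 3) g (b x y) = b (iter (m * 3) f x) y.
Proof. by elim: m => // m IH; rewrite mulSn !iterD IH /= finv3_beta. Qed.

Lemma f2_beta_finv x y : b (g x) (g y) = f (f (b x y)).
Proof. by rewrite !f_beta beta_finv3 !fK. Qed.

End MoufangPerm.

Definition beta_pow (X : zmodType) (f g : X -> X) n x y :=
  \sum_(m < n) iter (m * 3) g (assoc_beta f g x y).

Section Powers.
Variables (X : zmodType) (f g : X -> X).
Hypothesis M : moufang_perm f g.
Local Notation b := (assoc_beta f g).

Lemma Img_beta_pow_term m x y : Img b (iter (m * 3) g (b x y)).
Proof. by apply: (Img_iter_finv M); do 2 eexists. Qed.

Lemma assoc_beta_iter n x y :
  assoc_beta (iter n f) (iter n g) x y = beta_pow f g n x y.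
Proof.
apply: assoc_beta_eq; elim: n => [|n IH]; first by rewrite /beta_pow big_ord0 addr0.
rewrite /beta_pow big_ord_recr /= -/(beta_pow f g n x y) addrA -iterS iterSr assoc_betaK.
rewrite (iter_finvD_Img M) ?IH; last by do 2 eexists.
rewrite (iter_finv_beta M) -iterD (iter_can (fK M)) (iter3_finv_beta M).
by congr (_ + b (iter _ f x) y); rewrite -addnn; lia.
Qed.

Lemma moufang_iter n : moufang_perm (iter n f) (iter n g).
Proof.
have fnK := iter_can (fK M) n; have gnK := iter_can (gK M) n.
split => //; first split.
- by move=> x y; rewrite !assoc_beta_iter; apply: eq_bigr => i _; rewrite (betaC M).
- by move=> x; rewrite assoc_beta_iter; apply: big1 => i _; rewrite (betaxx M) (iter_finv0 M).
- move=> x y z; rewrite !assoc_beta_iter -big_split; apply: eq_bigr => i _.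
  by rewrite (betaDl M) (iter_finvD_Img M) //; exists y, z.
- move=> x y z; rewrite !assoc_beta_iter -big_split; apply: eq_bigr => i _.
  by rewrite (betaDr M) (iter_finvD_Img M) //; exists x, z.
- move=> x y z; rewrite !assoc_beta_iter; apply: big1 => i _.
  by rewrite (beta_sum_Img M) ?(iter_finv0 M) // => j; apply: Img_beta_pow_term.
- move=> x y; rewrite !assoc_beta_iter /beta_pow (iter_f_sum M); last first.
    by move=> i; apply: Img_beta_pow_term.
  apply: eq_bigr => i _; rewrite (iter_comm_inv (fK M) (gK M)) (iter_f_beta M).
  by rewrite -addnn iterD !(iter_can (fK M)).
Qed.

Lemma Img_beta_pow n x y : Img b (beta_pow f g n x y).
Proof.
exists (\sum_(m < n) iter (m * 3) f x), y.
rewrite /beta_pow (big_morph (b^~ y) (fun u v => betaDl M u v y) (beta0l M y)).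
by apply: eq_bigr => i _; rewrite (iter3_finv_beta M).
Qed.

Lemma Rad_beta_pow n z : Rad b z -> Rad (beta_pow f g n) z.
Proof. by move=> Hz y; apply: big1 => i _; rewrite Hz (iter_finv0 M). Qed.

Lemma assoc_beta_inv x y : assoc_beta g f x y = f (f (f (b x y))).
Proof.
apply: assoc_beta_eq.
have -> : g x + g y = g (x + y) + b (g x) (g y).
  by rewrite (finvD M) -addrA -{2}(oppr_beta M) subrr addr0.
rewrite (fD_Img M); last by do 2 eexists.
by rewrite (gK M) (f2_beta_finv M).
Qed.

Lemma moufang_inv : moufang_perm g f.
Proof.
have f3D_Img u c : Img b c -> f (f (f (u + c))) = f (f (f u)) + f (f (f c)).
  by move=> Hc; rewrite !(fD_Img M) //; do ?apply: (Img_f M).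
have Hb x y : Img b (b x y) by do 2 eexists.
split; [exact: gK M | exact: fK M | split | |].
- by move=> x y; rewrite !assoc_beta_inv (betaC M).
- by move=> x; rewrite assoc_beta_inv (betaxx M) !(f0 M).
- by move=> x y z; rewrite !assoc_beta_inv (betaDl M) f3D_Img.
- by move=> x y z; rewrite !assoc_beta_inv (betaDr M) f3D_Img.
- by move=> x y z; rewrite !assoc_beta_inv (Img_Rad M) ?(f0 M) //; do 3 apply: (Img_f M).
- by move=> x y; rewrite !assoc_beta_inv (f2_beta_finv M) (fK M) -(f3_beta M).
Qed.

Lemma Img_assoc_beta_inv z : Img (assoc_beta g f) z -> Img b z.
Proof. by case=> x [y ->]; rewrite assoc_beta_inv (f3_beta M); do 2 eexists. Qed.

Lemma Rad_assoc_beta_inv z : Rad b z -> Rad (assoc_beta g f) z.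
Proof. by move=> Hz y; rewrite assoc_beta_inv Hz !(f0 M). Qed.

End Powers.

Lemma fpowN_Posz (X : zmodType) (f g : X -> X) n : fpow f g (- n%:Z) = iter n g.
Proof. by case: n. Qed.

Lemma beta_i_Posz (X : zmodType) (f g : X -> X) n x y :
  beta_i f g n%:Z x y = beta_pow f g n x y.
Proof.
have intI0 : intI 0 n%:Z = [seq k%:Z | k <- iota 0 n].
  by case: n => // n; rewrite /intI /= add0r addn0.
rewrite /beta_i intI0 big_map /beta_pow -(big_mkord xpredT (fun m => iter (m * 3) g _)).
by rewrite /index_iota subn0; apply: eq_bigr => i _; rewrite -PoszM fpowN_Posz.
Qed.

Lemma beta_i_Negz (X : zmodType) (f g : X -> X) n x y : moufang_perm f g ->
  beta_i f g (Negz n) x y = beta_pow g f n.+1 x y.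
Proof.
move=> M; rewrite /beta_i big_map /beta_pow.
rewrite -(big_mkord xpredT (fun m => iter (m * 3) f (assoc_beta g f x y))).
rewrite big_nat_rev -[iota 0 n.+1]/(index_iota 0 n.+1).
apply: eq_big_nat => i /andP [_ lt_in].
have -> : - ((Negz n + i%:Z) * 3) = Posz ((0 + n.+1 - i.+1) * 3 + 3) by rewrite NegzE; lia.
by rewrite (assoc_beta_inv M) /= iterD.
Qed.

Theorem mainTheorem13 (X : zmodType) (f finv : X -> X) (i : int) :
  moufang_perm f finv ->
  [/\ moufang_perm (fpow f finv i) (fpow f finv (- i)),
      (forall x y, assoc_beta (fpow f finv i) (fpow f finv (- i)) x y
                   = beta_i f finv i x y),
      (forall z, Img (beta_i f finv i) z -> Img (assoc_beta f finv) z),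
      (forall z, Img (assoc_beta f finv) z -> Rad (assoc_beta f finv) z) &
      (forall z, Rad (assoc_beta f finv) z -> Rad (beta_i f finv i) z)].
Proof.
move=> M; case: i => n.
- rewrite fpowN_Posz; have -> : fpow f finv (Posz n) = iter n f by [].
  split; first exact: moufang_iter.
  + by move=> x y; rewrite assoc_beta_iter ?beta_i_Posz.
  + by move=> _ [x [y ->]]; rewrite beta_i_Posz; apply: Img_beta_pow.
  + exact: Img_Rad.
  + by move=> z Hz y; rewrite beta_i_Posz; apply: Rad_beta_pow.
- have -> : fpow f finv (Negz n) = iter n.+1 finv by [].
  have -> : fpow f finv (- Negz n) = iter n.+1 f by [].
  have Minv := moufang_inv M.
  split; first exact: moufang_iter.
  + by move=> x y; rewrite assoc_beta_iter ?beta_i_Negz.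
  + move=> _ [x [y ->]]; rewrite beta_i_Negz //.
    by apply: (Img_assoc_beta_inv M); apply: Img_beta_pow.
  + exact: Img_Rad.
  + move=> z Hz y; rewrite beta_i_Negz //.
    exact: (Rad_beta_pow Minv) (Rad_assoc_beta_inv M Hz) y.
Qed.
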